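(* Let $(X_n)_{n\ge0}$ be a Bienaym\'e--Galton--Watson branching process with $X_0=1$ and offspring distribution $\mathrm{Bin}(n_0,1/n_0)$, $n_0\ge2$, and let $Y_n=\sum_{k=0}^nX_k$. There exist constants $c_1,c_2$ (not depending on $n_0$) such that for all $n\ge1$ and $\lambda>0$, $$P(X_n[n]\ge\lambda n)\le c_1e^{-\lambda/6},\qquad P(Y_n[n]\ge\lambda n^2)\le c_2e^{-\lambda/5}.$$
   Context: For a random variable $\xi$ and integer $n\ge1$, $\xi[n]$ denotes a random variable distributed as $\sum_{i=1}^n\xi_i$ where $\xi_1,\dots,\xi_n$ are i.i.d. copies of $\xi$. *)

From Stdlib Require Import Reals Arith.
From Coquelicot Require Import Coquelicot.
Open Scope R_scope.

(* A probability law on nat is represented by its mass function nat -> R. *)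

Definition offspring (n0 : nat) (k : nat) : R :=
  if (k <=? n0)%nat then
    Binomial.C n0 k * (1 / INR n0) ^ k * (1 - 1 / INR n0) ^ (n0 - k)
  else 0.

Definition conv (p q : nat -> R) (k : nat) : R :=
  sum_f_R0 (fun i => p i * q (k - i)%nat) k.

Definition dirac0 (k : nat) : R := if (k =? 0)%nat then 1 else 0.

(* convpow p m = law of xi_1 + ... + xi_m, xi_i iid with law p
   (so convpow p m is the law of xi[m]; convpow p 0 = dirac at 0). *)
Fixpoint convpow (p : nat -> R) (m : nat) : nat -> R :=
  match m with
  | O => dirac0
  | S m' => conv p (convpow p m')
  end.

Definition bgw_kernel (n0 x1 : nat) : nat -> R := convpow (offspring n0) x1.

(* joint n0 k x y = P(X_k = x, Y_k = y), where X_0 = 1, Y_k = X_0 + ... + X_k.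
   Recursion: Y_{k+1} = Y_k + X_{k+1}, and X_{k+1} given X_k = x1 has law
   bgw_kernel n0 x1 (law of total probability over x1). *)
Fixpoint joint (n0 k : nat) (x y : nat) : R :=
  match k with
  | O => if ((x =? 1) && (y =? 1))%bool then 1 else 0
  | S k' =>
      if (x <=? y)%nat then
        Series (fun x1 => joint n0 k' x1 (y - x)%nat * bgw_kernel n0 x1 x)
      else 0
  end.

Definition lawX (n0 n : nat) (x : nat) : R := Series (fun y => joint n0 n x y).
Definition lawY (n0 n : nat) (y : nat) : R := Series (fun x => joint n0 n x y).

Definition tail (p : nat -> R) (t : R) : R :=
  Series (fun k => if Rle_dec t (INR k) then p k else 0).

From Stdlib Require Import Reals Arith Lia Lra.
From Coquelicot Require Import Coquelicot.
Open Scope R_scope.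

(* By Chernoff's bound, P(S >= t) <= e^{-θt} G(e^θ)^n when S is a sum of n
   i.i.d. copies of a variable with generating function G.  The joint
   generating function H_k(z, w) = E[z^{X_k} w^{Y_k}] satisfies H_0(z, w) = zw
   and H_{k+1}(z, w) = H_k(f(zw), w), where f(s) = (1 + (s - 1)/n0)^n0 <= e^{s-1}
   is the offspring generating function.  Since e^{1/m} <= 1 + 1/(m - 1), the
   map z |-> f(zw) sends [0, 1 + 1/m] into [0, 1 + 1/(m - 2)] as long as
   (w - 1)(m^2 - 1) <= 1, so H_n(z, w) <= w (1 + 1/(m - 2n)).  Taking
   θ = 1/(6n), z = e^θ, w = 1, m = 6n - 1 for X_n, and θ = 1/(5n^2), z = 1,
   w = e^θ, m = 11n/5 for Y_n, the n-th powers of these bounds stay below e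
   and e^6 respectively. *)

Definition vanishes_after (a : nat -> R) (N : nat) : Prop :=
  forall k, (N < k)%nat -> a k = 0.

Lemma is_series_vanishes_after a N :
  vanishes_after a N -> is_series a (sum_f_R0 a N).
Proof.
  intros Ha. apply (filterlim_ext_loc (fun _ => sum_f_R0 a N)).
  - exists N. intros n Hn. rewrite sum_n_Reals.
    induction Hn as [|n Hn IH]; [reflexivity|].
    simpl. rewrite (Ha (S n)), <- IH by lia. ring.
  - apply filterlim_const.
Qed.

Lemma Series_vanishes_after a N : vanishes_after a N -> Series a = sum_f_R0 a N.
Proof. intros Ha. apply is_series_unique, is_series_vanishes_after, Ha. Qed.

Lemma ex_series_vanishes_after a N : vanishes_after a N -> ex_series a.
Proof. intros Ha. eexists. apply is_series_vanishes_after, Ha. Qed.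

Lemma Series_0 a : (forall k, a k = 0) -> Series a = 0.
Proof.
  intros Ha. rewrite (Series_vanishes_after a 0) by (intros k _; apply Ha).
  apply Ha.
Qed.

Lemma Series_nonneg a N :
  vanishes_after a N -> (forall k, 0 <= a k) -> 0 <= Series a.
Proof. intros Ha Hpos. rewrite (Series_vanishes_after a N Ha). apply cond_pos_sum, Hpos. Qed.

Lemma sum_f_R0_swap (a : nat -> nat -> R) N M :
  sum_f_R0 (fun x => sum_f_R0 (fun y => a x y) M) N =
  sum_f_R0 (fun y => sum_f_R0 (fun x => a x y) N) M.
Proof. induction M as [|M IH]; simpl; [reflexivity|]. rewrite sum_plus, IH. reflexivity. Qed.

Lemma Series_swap (a : nat -> nat -> R) N :
  (forall x y, (N < x)%nat \/ (N < y)%nat -> a x y = 0) ->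
  Series (fun x => Series (fun y => a x y)) = Series (fun y => Series (fun x => a x y)).
Proof.
  intros Ha.
  rewrite (Series_ext _ (fun x => sum_f_R0 (fun y => a x y) N)),
    (Series_ext (fun y => Series _) (fun y => sum_f_R0 (fun x => a x y) N)).
  - rewrite (Series_vanishes_after _ N), (Series_vanishes_after (fun y => sum_f_R0 _ N) N).
    + apply sum_f_R0_swap.
    + intros y Hy. apply sum_eq_R0. intros x _. apply Ha. lia.
    + intros x Hx. apply sum_eq_R0. intros y _. apply Ha. lia.
  - intros y. apply Series_vanishes_after. intros x Hx. apply Ha. lia.
  - intros x. apply Series_vanishes_after. intros y Hy. apply Ha. lia.
Qed.

Lemma Series_shift (g : nat -> R) x :
  Series (fun y => if (x <=? y)%nat then g (y - x)%nat else 0) = Series g.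
Proof.
  rewrite (Series_incr_n_aux _ x).
  - apply Series_ext. intros k. rewrite (proj2 (Nat.leb_le x (x + k))) by lia.
    f_equal. lia.
  - intros k Hk. destruct (Nat.leb_spec x k); [lia | reflexivity].
Qed.

Definition pgf (p : nat -> R) (z : R) : R := Series (fun k => p k * z ^ k).

Lemma pgf_terms_vanish_after p N z :
  vanishes_after p N -> vanishes_after (fun k => p k * z ^ k) N.
Proof. intros Hp k Hk. rewrite Hp by exact Hk. ring. Qed.

Lemma pgf_nonneg p N z :
  vanishes_after p N -> (forall k, 0 <= p k) -> 0 <= z -> 0 <= pgf p z.
Proof.
  intros Hp Hpos Hz. apply (Series_nonneg _ N); [apply pgf_terms_vanish_after, Hp|].
  intros k. apply Rmult_le_pos; [apply Hpos | apply pow_le, Hz].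
Qed.

Lemma conv_vanishes_after p q a b :
  vanishes_after p a -> vanishes_after q b -> vanishes_after (conv p q) (a + b).
Proof.
  intros Hp Hq k Hk. apply sum_eq_R0. intros i Hi.
  destruct (Nat.le_gt_cases i a).
  - rewrite (Hq (k - i)%nat) by lia. ring.
  - rewrite Hp by lia. ring.
Qed.

Lemma conv_nonneg p q :
  (forall k, 0 <= p k) -> (forall k, 0 <= q k) -> forall k, 0 <= conv p q k.
Proof. intros Hp Hq k. apply cond_pos_sum. intros i. apply Rmult_le_pos; auto. Qed.

Lemma pgf_conv p q a b z :
  vanishes_after p a -> vanishes_after q b -> pgf (conv p q) z = pgf p z * pgf q z.
Proof.
  intros Hp Hq. apply is_series_unique.
  eapply is_series_ext;
    [| apply (is_series_mult (fun k => p k * z ^ k) (fun k => q k * z ^ k))].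
  - intros n. unfold conv. rewrite Rmult_comm, scal_sum. apply sum_eq. intros i Hi.
    replace (z ^ n) with (z ^ i * z ^ (n - i)) by (rewrite <- pow_add; f_equal; lia). ring.
  - apply Series_correct, (ex_series_vanishes_after _ a), pgf_terms_vanish_after, Hp.
  - apply Series_correct, (ex_series_vanishes_after _ b), pgf_terms_vanish_after, Hq.
  - apply (ex_series_vanishes_after _ a). intros k Hk. rewrite Hp by exact Hk.
    rewrite Rmult_0_l. apply Rabs_R0.
  - apply (ex_series_vanishes_after _ b). intros k Hk. rewrite Hq by exact Hk.
    rewrite Rmult_0_l. apply Rabs_R0.
Qed.

Lemma convpow_vanishes_after p b m :
  vanishes_after p b -> vanishes_after (convpow p m) (m * b).
Proof.
  intros Hp. induction m as [|m IH]; simpl.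
  - intros [|k] Hk; [lia | reflexivity].
  - apply conv_vanishes_after; assumption.
Qed.

Lemma convpow_nonneg p m : (forall k, 0 <= p k) -> forall k, 0 <= convpow p m k.
Proof.
  intros Hp. induction m as [|m IH]; simpl.
  - intros k. unfold dirac0. destruct (k =? 0)%nat; lra.
  - apply conv_nonneg; assumption.
Qed.

Lemma pgf_convpow p b m z : vanishes_after p b -> pgf (convpow p m) z = pgf p z ^ m.
Proof.
  intros Hp. induction m as [|m IH]; simpl.
  - unfold pgf, dirac0. rewrite (Series_vanishes_after _ 0); [simpl; ring|].
    intros [|k] Hk; [lia | simpl; ring].
  - rewrite (pgf_conv _ _ b (m * b)), IH; [reflexivity | assumption |].
    apply convpow_vanishes_after, Hp.
Qed.

Lemma exp_le_compat a b : a <= b -> exp a <= exp b.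
Proof. intros [Hlt | ->]; [apply Rlt_le, exp_increasing, Hlt | apply Rle_refl]. Qed.

Lemma exp_pow x n : exp x ^ n = exp (INR n * x).
Proof.
  induction n as [|n IH]; simpl pow.
  - rewrite Rmult_0_l, exp_0. reflexivity.
  - rewrite IH, <- exp_plus, S_INR. f_equal. ring.
Qed.

Lemma pow_le_exp u n : 0 <= u -> (1 + u) ^ n <= exp (INR n * u).
Proof. intros Hu. rewrite <- exp_pow. apply pow_incr. pose proof (exp_ineq1_le u). lra. Qed.

Lemma tail_le_pgf p N t th :
  vanishes_after p N -> (forall k, 0 <= p k) -> 0 <= th ->
  tail p t <= exp (- (th * t)) * pgf p (exp th).
Proof.
  intros Hp Hpos Hth. unfold tail, pgf.
  rewrite (Series_vanishes_after _ N), (Series_vanishes_after (fun k => p k * _) N).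
  - rewrite scal_sum. apply sum_Rle. intros k _.
    rewrite exp_pow, Rmult_assoc, <- exp_plus.
    destruct (Rle_dec t (INR k)) as [Htk | _].
    + assert (1 <= exp (INR k * th + - (th * t))).
      { pose proof (exp_ineq1_le (INR k * th + - (th * t))). nra. }
      pose proof (Hpos k). nra.
    + apply Rmult_le_pos; [apply Hpos | apply Rlt_le, exp_pos].
  - apply pgf_terms_vanish_after, Hp.
  - intros k Hk. rewrite Hp by exact Hk. destruct (Rle_dec t (INR k)); reflexivity.
Qed.

Lemma tail_convpow_le p N m t th :
  vanishes_after p N -> (forall k, 0 <= p k) -> 0 <= th ->
  tail (convpow p m) t <= exp (- (th * t)) * pgf p (exp th) ^ m.
Proof.
  intros Hp Hpos Hth. rewrite <- (pgf_convpow p N) by exact Hp.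
  apply (tail_le_pgf _ (m * N));
    [apply convpow_vanishes_after, Hp | apply convpow_nonneg, Hpos | exact Hth].
Qed.

Lemma exp_mul_one_sub_le v : exp v * (1 - v) <= 1.
Proof.
  pose proof (exp_ineq1_le (- v)). pose proof (exp_pos v).
  replace 1 with (exp v * exp (- v)) at 2 by (rewrite <- exp_plus, Rplus_opp_r; apply exp_0).
  apply Rmult_le_compat_l; lra.
Qed.

Lemma exp_inv_le m : 1 < m -> exp (/ m) <= 1 + / (m - 1).
Proof.
  intros Hm. pose proof (exp_mul_one_sub_le (/ m)).
  replace (1 + / (m - 1)) with (/ (1 - / m)) by (field; lra).
  assert (0 < 1 - / m).
  { assert (/ m < 1) by (rewrite <- Rinv_1; apply Rinv_lt_contravar; lra). lra. }
  apply (Rmult_le_reg_r (1 - / m)); [assumption|].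
  rewrite Rinv_l by lra. assumption.
Qed.

Lemma offspring_vanishes_after n0 : vanishes_after (offspring n0) n0.
Proof. intros k Hk. unfold offspring. destruct (Nat.leb_spec k n0); [lia | reflexivity]. Qed.

Lemma one_le_INR n : (1 <= n)%nat -> 1 <= INR n.
Proof. apply (le_INR 1). Qed.

Lemma one_div_INR_bounds n : (1 <= n)%nat -> 0 <= 1 / INR n <= 1.
Proof.
  intros Hn. pose proof (one_le_INR n Hn). split; [apply Rlt_le, Rdiv_lt_0_compat; lra|].
  unfold Rdiv. rewrite Rmult_1_l, <- Rinv_1. apply Rinv_le_contravar; lra.
Qed.

Lemma offspring_nonneg n0 : (1 <= n0)%nat -> forall k, 0 <= offspring n0 k.
Proof.
  intros Hn0 k. pose proof (one_div_INR_bounds n0 Hn0).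
  unfold offspring. destruct (k <=? n0)%nat; [|lra].
  apply Rmult_le_pos; [apply Rmult_le_pos|]; [| apply pow_le; lra ..].
  unfold Binomial.C. apply Rmult_le_pos; [apply pos_INR|].
  apply Rlt_le, Rinv_0_lt_compat, Rmult_lt_0_compat; apply lt_0_INR, lt_O_fact.
Qed.

Lemma pgf_offspring n0 t :
  (1 <= n0)%nat -> pgf (offspring n0) t = (1 + (t - 1) / INR n0) ^ n0.
Proof.
  intros Hn0. pose proof (one_le_INR n0 Hn0).
  replace (1 + (t - 1) / INR n0) with (1 / INR n0 * t + (1 - 1 / INR n0)) by (field; lra).
  unfold pgf. rewrite (Series_vanishes_after _ n0)
    by apply pgf_terms_vanish_after, offspring_vanishes_after.
  rewrite binomial. apply sum_eq. intros i Hi. unfold offspring.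
  rewrite (proj2 (Nat.leb_le i n0) Hi), Rpow_mult_distr. ring.
Qed.

Lemma pgf_offspring_le_exp n0 t :
  (1 <= n0)%nat -> 0 <= t -> pgf (offspring n0) t <= exp (t - 1).
Proof.
  intros Hn0 Ht. pose proof (one_le_INR n0 Hn0).
  rewrite pgf_offspring by exact Hn0.
  replace (t - 1) with (INR n0 * ((t - 1) / INR n0)) at 2 by (field; lra).
  rewrite <- exp_pow. apply pow_incr. split.
  - assert (- 1 <= (t - 1) / INR n0).
    { apply (Rmult_le_reg_r (INR n0)); [lra|]. field_simplify; lra. }
    lra.
  - apply exp_ineq1_le.
Qed.

Lemma pgf_offspring_le_inv n0 m s :
  (1 <= n0)%nat -> 1 < m -> 0 <= s <= 1 + / m -> pgf (offspring n0) s <= 1 + / (m - 1).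
Proof.
  intros Hn0 Hm Hs. eapply Rle_trans; [apply pgf_offspring_le_exp; [exact Hn0 | lra]|].
  apply Rle_trans with (exp (/ m)); [apply exp_le_compat; lra | apply exp_inv_le, Hm].
Qed.

Lemma mul_le_one_add_inv z w m :
  1 < m -> 1 <= w -> (w - 1) * (m ^ 2 - 1) <= 1 -> 0 <= z <= 1 + / m ->
  z * w <= 1 + / (m - 1).
Proof.
  intros Hm Hw Hwm Hz.
  apply Rle_trans with ((1 + / m) * w); [apply Rmult_le_compat_r; lra|].
  assert (E : 1 + / (m - 1) - (1 + / m) * w
              = (1 - (w - 1) * (m ^ 2 - 1)) * / (m * (m - 1))) by (field; lra).
  assert (0 <= (1 - (w - 1) * (m ^ 2 - 1)) * / (m * (m - 1))).
  { apply Rmult_le_pos; [lra | apply Rlt_le, Rinv_0_lt_compat; nra]. }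
  lra.
Qed.

Lemma pgf_offspring_step n0 z w m :
  (1 <= n0)%nat -> 2 < m -> 1 <= w -> (w - 1) * (m ^ 2 - 1) <= 1 ->
  0 <= z <= 1 + / m -> pgf (offspring n0) (z * w) <= 1 + / (m - 2).
Proof.
  intros Hn0 Hm Hw Hwm Hz. replace (m - 2) with (m - 1 - 1) by ring.
  apply pgf_offspring_le_inv; [exact Hn0 | lra |]. split; [nra|].
  apply (mul_le_one_add_inv z w m); lra.
Qed.

Definition bgw_bound (n0 k : nat) : nat := ((n0 + 1) ^ k)%nat.

Lemma bgw_bound_succ n0 k : bgw_bound n0 (S k) = (bgw_bound n0 k + bgw_bound n0 k * n0)%nat.
Proof. unfold bgw_bound. rewrite Nat.pow_succ_r'. lia. Qed.

Lemma bgw_kernel_vanishes_after n0 x1 : vanishes_after (bgw_kernel n0 x1) (x1 * n0).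
Proof. apply convpow_vanishes_after, offspring_vanishes_after. Qed.

Lemma bgw_kernel_vanishes n0 B x1 x :
  (x1 <= B)%nat -> (B * n0 < x)%nat -> bgw_kernel n0 x1 x = 0.
Proof.
  intros Hx1 Hx. apply bgw_kernel_vanishes_after.
  pose proof (Nat.mul_le_mono_r _ _ n0 Hx1). lia.
Qed.

Lemma joint_mul_kernel_vanishes n0 k x1 x y :
  (forall x y, (bgw_bound n0 k < x \/ bgw_bound n0 k < y)%nat -> joint n0 k x y = 0) ->
  (bgw_bound n0 (S k) < x1 \/ bgw_bound n0 (S k) < x + y)%nat ->
  joint n0 k x1 y * bgw_kernel n0 x1 x = 0.
Proof.
  intros Hjoint Hx1xy. rewrite bgw_bound_succ in Hx1xy.
  destruct (Nat.le_gt_cases x1 (bgw_bound n0 k)); [|rewrite Hjoint by lia; ring].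
  destruct (Nat.le_gt_cases x (bgw_bound n0 k * n0)).
  - rewrite Hjoint by lia. ring.
  - rewrite (bgw_kernel_vanishes n0 (bgw_bound n0 k)) by assumption. ring.
Qed.

Lemma joint_vanishes n0 k x y :
  (bgw_bound n0 k < x \/ bgw_bound n0 k < y)%nat -> joint n0 k x y = 0.
Proof.
  revert x y. induction k as [|k IH]; intros x y Hxy; simpl joint.
  - unfold bgw_bound in Hxy. simpl in Hxy.
    destruct (Nat.eqb_spec x 1), (Nat.eqb_spec y 1); simpl; [lia | reflexivity ..].
  - destruct (Nat.leb_spec x y); [|reflexivity].
    apply Series_0. intros x1. apply joint_mul_kernel_vanishes; [exact IH | lia].
Qed.

Lemma joint_nonneg n0 k x y : (1 <= n0)%nat -> 0 <= joint n0 k x y.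
Proof.
  intros Hn0. revert x y. induction k as [|k IH]; intros x y; simpl joint.
  - destruct (_ && _)%bool; lra.
  - destruct (x <=? y)%nat; [|lra].
    apply (Series_nonneg _ (bgw_bound n0 k)).
    + intros x1 Hx1. rewrite joint_vanishes by lia. ring.
    + intros x1. apply Rmult_le_pos; [apply IH |].
      apply convpow_nonneg, offspring_nonneg, Hn0.
Qed.

Lemma lawX_vanishes_after n0 n : vanishes_after (lawX n0 n) (bgw_bound n0 n).
Proof. intros x Hx. apply Series_0. intros y. apply joint_vanishes. lia. Qed.

Lemma lawY_vanishes_after n0 n : vanishes_after (lawY n0 n) (bgw_bound n0 n).
Proof. intros y Hy. apply Series_0. intros x. apply joint_vanishes. lia. Qed.

Lemma lawX_nonneg n0 n : (1 <= n0)%nat -> forall x, 0 <= lawX n0 n x.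
Proof.
  intros Hn0 x. apply (Series_nonneg _ (bgw_bound n0 n)).
  - intros y Hy. apply joint_vanishes. lia.
  - intros y. apply joint_nonneg, Hn0.
Qed.

Lemma lawY_nonneg n0 n : (1 <= n0)%nat -> forall y, 0 <= lawY n0 n y.
Proof.
  intros Hn0 y. apply (Series_nonneg _ (bgw_bound n0 n)).
  - intros x Hx. apply joint_vanishes. lia.
  - intros x. apply joint_nonneg, Hn0.
Qed.

Definition joint_pgf_slice (n0 k x : nat) (w : R) : R :=
  Series (fun y => joint n0 k x y * w ^ y).

Definition joint_pgf (n0 k : nat) (z w : R) : R :=
  Series (fun x => z ^ x * joint_pgf_slice n0 k x w).

Lemma joint_pgf_slice_vanishes_after n0 k w :
  vanishes_after (fun x => joint_pgf_slice n0 k x w) (bgw_bound n0 k).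
Proof. intros x Hx. apply Series_0. intros y. rewrite joint_vanishes by lia. ring. Qed.

Lemma joint_pgf_0 n0 z w : joint_pgf n0 0 z w = z * w.
Proof.
  unfold joint_pgf. rewrite (Series_vanishes_after _ 1).
  - unfold joint_pgf_slice. simpl. rewrite Series_0, (Series_vanishes_after _ 1).
    + simpl. ring.
    + intros [|[|y]] Hy; simpl; [lia .. | ring].
    + intros [|y]; simpl; ring.
  - intros x Hx. rewrite (joint_pgf_slice_vanishes_after n0 0 w x) by exact Hx. ring.
Qed.

Lemma joint_pgf_slice_succ n0 k x w :
  joint_pgf_slice n0 (S k) x w
  = w ^ x * Series (fun x1 => bgw_kernel n0 x1 x * joint_pgf_slice n0 k x1 w).
Proof.
  unfold joint_pgf_slice at 1. simpl joint.
  rewrite (Series_ext _ (fun y => Series (fun x1 =>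
    if (x <=? y)%nat then joint n0 k x1 (y - x) * bgw_kernel n0 x1 x * w ^ y else 0))).
  2:{ intros y. destruct (x <=? y)%nat.
      - rewrite <- Series_scal_r. reflexivity.
      - rewrite Series_0 by reflexivity. ring. }
  rewrite (Series_swap _ (bgw_bound n0 (S k))).
  2:{ intros y x1 Hyx1. destruct (Nat.leb_spec x y); [|reflexivity].
      rewrite joint_mul_kernel_vanishes; [ring | intros; apply joint_vanishes; assumption | lia]. }
  rewrite <- Series_scal_l. apply Series_ext. intros x1.
  transitivity (Series (fun y => joint n0 k x1 y * w ^ y) * (bgw_kernel n0 x1 x * w ^ x));
    [| unfold joint_pgf_slice; ring].
  rewrite <- Series_scal_r,
    <- (Series_shift (fun y => joint n0 k x1 y * w ^ y * (bgw_kernel n0 x1 x * w ^ x)) x).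
  apply Series_ext. intros y.
  destruct (Nat.leb_spec x y); [|reflexivity].
  replace (w ^ y) with (w ^ (y - x) * w ^ x) by (rewrite <- pow_add; f_equal; lia). ring.
Qed.

Lemma joint_pgf_succ n0 k z w :
  joint_pgf n0 (S k) z w = joint_pgf n0 k (pgf (offspring n0) (z * w)) w.
Proof.
  unfold joint_pgf at 1.
  rewrite (Series_ext _ (fun x => Series (fun x1 =>
    bgw_kernel n0 x1 x * (z * w) ^ x * joint_pgf_slice n0 k x1 w))).
  2:{ intros x. rewrite joint_pgf_slice_succ, <- !Series_scal_l.
      apply Series_ext. intros x1. rewrite Rpow_mult_distr. ring. }
  rewrite (Series_swap _ (bgw_bound n0 (S k))).
  2:{ intros x x1 Hxx1. rewrite bgw_bound_succ in Hxx1.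
      destruct (Nat.le_gt_cases x1 (bgw_bound n0 k)).
      - rewrite (bgw_kernel_vanishes n0 (bgw_bound n0 k)) by lia. ring.
      - rewrite joint_pgf_slice_vanishes_after by exact H. ring. }
  unfold joint_pgf. apply Series_ext. intros x1. rewrite Series_scal_r.
  change (Series (fun x => bgw_kernel n0 x1 x * (z * w) ^ x)) with (pgf (bgw_kernel n0 x1) (z * w)).
  unfold bgw_kernel. rewrite (pgf_convpow _ n0) by apply offspring_vanishes_after. ring.
Qed.

Lemma pgf_lawX n0 n z : pgf (lawX n0 n) z = joint_pgf n0 n z 1.
Proof.
  unfold pgf, lawX, joint_pgf, joint_pgf_slice. apply Series_ext. intros x.
  rewrite <- Series_scal_l, <- Series_scal_r. apply Series_ext. intros y. rewrite pow1. ring.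
Qed.

Lemma pgf_lawY n0 n w : pgf (lawY n0 n) w = joint_pgf n0 n 1 w.
Proof.
  unfold pgf, lawY, joint_pgf, joint_pgf_slice.
  rewrite (Series_ext (fun x => 1 ^ x * _) (fun x => Series (fun y => joint n0 n x y * w ^ y)))
    by (intros x; rewrite pow1; ring).
  rewrite (Series_swap _ (bgw_bound n0 n)).
  - apply Series_ext. intros y. rewrite Series_scal_r. reflexivity.
  - intros x y Hxy. rewrite joint_vanishes by exact Hxy. ring.
Qed.

Lemma joint_pgf_le n0 k w :
  (1 <= n0)%nat -> 1 <= w ->
  forall z m, 2 * INR k < m -> (w - 1) * (m ^ 2 - 1) <= 1 -> 0 <= z <= 1 + / m ->
  joint_pgf n0 k z w <= w * (1 + / (m - 2 * INR k)).
Proof.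
  intros Hn0 Hw. induction k as [|k IH]; intros z m Hkm Hwm Hz.
  - rewrite joint_pgf_0, (Rmult_comm w). simpl INR.
    replace (m - 2 * 0) with m by ring. apply Rmult_le_compat_r; lra.
  - rewrite joint_pgf_succ. rewrite S_INR in Hkm |- *. pose proof (pos_INR k).
    replace (m - 2 * (INR k + 1)) with (m - 2 - 2 * INR k) by ring.
    apply IH; [lra | nra | split].
    + apply (pgf_nonneg _ n0);
        [apply offspring_vanishes_after | apply offspring_nonneg, Hn0 | nra].
    + apply pgf_offspring_step; [exact Hn0 | lra .. ].
Qed.

Lemma tail_convpow_lawX n0 n lam :
  (1 <= n0)%nat -> (1 <= n)%nat ->
  tail (convpow (lawX n0 n) n) (lam * INR n) <= exp 1 * exp (- lam / 6).
Proof.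
  intros Hn0 Hn. pose proof (one_le_INR n Hn).
  set (th := / (6 * INR n)).
  assert (Hth : 0 <= th) by (apply Rlt_le, Rinv_0_lt_compat; lra).
  eapply Rle_trans.
  { apply (tail_convpow_le _ (bgw_bound n0 n) n _ th);
      [apply lawX_vanishes_after | apply lawX_nonneg, Hn0 | exact Hth]. }
  replace (- (th * (lam * INR n))) with (- lam / 6) by (unfold th; field; lra).
  rewrite Rmult_comm. apply Rmult_le_compat_r; [apply Rlt_le, exp_pos|].
  assert (Hpgf : pgf (lawX n0 n) (exp th) <= 1 + / (4 * INR n - 1)).
  { rewrite pgf_lawX, <- (Rmult_1_l (1 + / (4 * INR n - 1))).
    replace (4 * INR n - 1) with (6 * INR n - 1 - 2 * INR n) by ring.
    apply joint_pgf_le; [exact Hn0 | lra .. | split].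
    - apply Rlt_le, exp_pos.
    - apply exp_inv_le. lra. }
  apply Rle_trans with ((1 + / (4 * INR n - 1)) ^ n).
  { apply pow_incr. split; [|exact Hpgf].
    apply (pgf_nonneg _ (bgw_bound n0 n));
      [apply lawX_vanishes_after | apply lawX_nonneg, Hn0 | apply Rlt_le, exp_pos]. }
  eapply Rle_trans; [apply pow_le_exp, Rlt_le, Rinv_0_lt_compat; lra|].
  apply exp_le_compat. apply (Rmult_le_reg_r (4 * INR n - 1)); [lra|].
  rewrite Rmult_assoc, Rinv_l; lra.
Qed.

Lemma tail_convpow_lawY n0 n lam :
  (1 <= n0)%nat -> (1 <= n)%nat ->
  tail (convpow (lawY n0 n) n) (lam * INR n ^ 2) <= exp 6 * exp (- lam / 5).
Proof.
  intros Hn0 Hn. pose proof (one_le_INR n Hn).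
  set (th := / (5 * INR n ^ 2)).
  assert (Hth : 0 <= th) by (apply Rlt_le, Rinv_0_lt_compat; nra).
  eapply Rle_trans.
  { apply (tail_convpow_le _ (bgw_bound n0 n) n _ th);
      [apply lawY_vanishes_after | apply lawY_nonneg, Hn0 | exact Hth]. }
  replace (- (th * (lam * INR n ^ 2))) with (- lam / 5) by (unfold th; field; lra).
  rewrite Rmult_comm. apply Rmult_le_compat_r; [apply Rlt_le, exp_pos|].
  set (w := exp th).
  assert (Hw : 1 <= w) by (pose proof (exp_ineq1_le th); unfold w; lra).
  assert (Hw1 : (w - 1) * (5 * INR n ^ 2 - 1) <= 1).
  { assert (w <= 1 + / (5 * INR n ^ 2 - 1)) by (apply exp_inv_le; nra).
    assert (Hinv : / (5 * INR n ^ 2 - 1) * (5 * INR n ^ 2 - 1) = 1) by (apply Rinv_l; nra).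
    assert (0 <= 5 * INR n ^ 2 - 1) by nra. nra. }
  (* m = 11n/5 satisfies m^2 <= 5n^2 and leaves m - 2n = n/5. *)
  assert (Hpgf : pgf (lawY n0 n) w <= w * (1 + 5 / INR n)).
  { rewrite pgf_lawY. replace (5 / INR n) with (/ (11 * INR n / 5 - 2 * INR n)) by (field; lra).
    apply joint_pgf_le; [exact Hn0 | lra | lra | nra | split].
    - lra.
    - assert (0 < / (11 * INR n / 5)) by (apply Rinv_0_lt_compat; lra). lra. }
  apply Rle_trans with ((w * (1 + 5 / INR n)) ^ n).
  { apply pow_incr. split; [|exact Hpgf].
    apply (pgf_nonneg _ (bgw_bound n0 n));
      [apply lawY_vanishes_after | apply lawY_nonneg, Hn0 | lra]. }
  rewrite Rpow_mult_distr. unfold w. rewrite exp_pow.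
  replace 6 with (1 + 5) by ring. rewrite exp_plus.
  assert (0 < 5 / INR n) by (apply Rdiv_lt_0_compat; lra).
  apply Rmult_le_compat; [apply Rlt_le, exp_pos | apply pow_le; lra | |].
  - apply exp_le_compat. unfold th. apply (Rmult_le_reg_r (5 * INR n ^ 2)); [nra|].
    rewrite Rmult_assoc, Rinv_l by nra. nra.
  - eapply Rle_trans; [apply pow_le_exp; lra|].
    apply exp_le_compat. right. field. lra.
Qed.

Theorem lemma2p2 :
  exists c1 c2 : R,
    forall n0 : nat, (2 <= n0)%nat ->
    forall n : nat, (1 <= n)%nat ->
    forall lam : R, 0 < lam ->
      tail (convpow (lawX n0 n) n) (lam * INR n) <= c1 * exp (- lam / 6) /\
      tail (convpow (lawY n0 n) n) (lam * INR n ^ 2) <= c2 * exp (- lam / 5).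
Proof.
  exists (exp 1), (exp 6). intros n0 Hn0 n Hn lam _.
  split; [apply tail_convpow_lawX | apply tail_convpow_lawY]; lia.
Qed.
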